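(* For $\varepsilon\in(0,1)$ and integers $j\ge 1$ define \[ A_{j,\varepsilon}= \begin{cases} \dfrac{2(-1)^{(j-1)/2}}{(j-2)\bigl(\frac{1}{2}(j-3)\bigr)!\sqrt{\pi}}, & \text{if } j\ge 3 \text{ and } j \text{ is odd},\\[1ex] \varepsilon, & \text{otherwise}. \end{cases} \] Then for every real $x$, \[ \int_{0}^{x} \exp\bigl(-\xi^{2}\operatorname{erf}(\xi)\bigr)\,d\xi =\sum_{n=0}^{\infty} \lim_{\varepsilon\to 0} \left( \sum_{\substack{k_{1}+2k_{2}+\cdots+nk_{n}=n\\ k_{1},k_{2},\dots,k_{n}\ge 0}} \prod_{j=1}^{n} \frac{A_{j,\varepsilon}^{\,k_{j}}}{k_{j}!} \right)\frac{x^{n+1}}{n+1}, \] where the inner sum runs over all tuples of nonnegative integers $(k_1,\dots,k_n)$ with $\sum_{j=1}^n jk_j=n$ (for $n=0$ the inner sum is the empty product, equal to $1$).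
   Context: $\operatorname{erf}(x)=\frac{2}{\sqrt{\pi}}\int_0^x e^{-s^2}\,ds$ is the Gauss error function. *)

From Stdlib Require Import Reals Factorial.
From Coquelicot Require Import Coquelicot.
From mathcomp Require Import ssreflect ssrbool ssrfun eqtype ssrnat seq fintype finfun bigop.

Open Scope R_scope.

Definition erf (x : R) : R :=
  2 / sqrt PI * RInt (fun s => exp (- (s ^ 2))) 0 x.

Definition A (j : nat) (eps : R) : R :=
  if (3 <= j)%N && Nat.odd j then
    2 * (-1) ^ ((j - 1) / 2)%nat
      / (INR (j - 2) * INR (Factorial.fact ((j - 3) / 2)%nat) * sqrt PI)
  else eps.

(* Inner sum over all tuples (k_1,...,k_n) of nonnegative integers with
   sum_j j*k_j = n.  Such k_j automatically satisfy k_j <= n, so we index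
   the tuples by k : 'I_n -> 'I_(n+1), where k i stands for k_{i+1}. *)
Definition inner_sum (n : nat) (eps : R) : R :=
  \big[Rplus/0]_(k : {ffun 'I_n -> 'I_n.+1}
                 | (\sum_(i < n) i.+1 * nat_of_ord (k i))%N == n)
    \big[Rmult/1]_(i < n)
       (A i.+1 eps ^ (nat_of_ord (k i)) / INR (Factorial.fact (nat_of_ord (k i)))).

From Stdlib Require Import Reals Lra Lia Factorial.
From Coquelicot Require Import Coquelicot.
From mathcomp Require Import ssreflect ssrbool ssrfun eqtype ssrnat seq fintype finfun bigop.
From mathcomp Require Import ssralg poly ssrnum Rstruct zify.
Import GRing.Theory Num.Theory.

(* The inner sum is the coefficient of X^n in prod_(j <= n) exp (A_{j,eps} X^j), a
   polynomial in eps, so its limit at 0 is its value c_n at eps = 0.  The numbers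
   a_j = A_{j,0} are the Taylor coefficients of g(x) = - x^2 erf x, and applying the
   Euler operator X d/dX to the product, which maps exp f to (X f') exp f, gives
   (n+1) c_(n+1) = sum_k (k+1) a_(k+1) c_(n-k), i.e. h' = g' h for h = sum_n c_n x^n.
   Since g is entire, this recurrence bounds |c_n| r^n for every r, so h is entire
   too; then h = exp g, and the series is the termwise integral of h. *)

Open Scope R_scope.

Section CongruenceModXn.
Variable F : nzRingType.
Local Open Scope ring_scope.
Implicit Types p q : {poly F}.

Definition eqmodXn K p q := forall n, (n < K)%N -> p`_n = q`_n.

Lemma eqmodXn_sym K p q : eqmodXn K p q -> eqmodXn K q p.
Proof. by move=> pq n ltnK; rewrite pq. Qed.

Lemma eqmodXn_trans K p q r : eqmodXn K p q -> eqmodXn K q r -> eqmodXn K p r.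
Proof. by move=> pq qr n ltnK; rewrite pq ?qr. Qed.

Lemma eqmodXnD K p q p' q' :
  eqmodXn K p q -> eqmodXn K p' q' -> eqmodXn K (p + p') (q + q').
Proof. by move=> pq pq' n ltnK; rewrite !coefD pq ?pq'. Qed.

Lemma eqmodXnM K p q p' q' :
  eqmodXn K p q -> eqmodXn K p' q' -> eqmodXn K (p * p') (q * q').
Proof.
move=> pq pq' n ltnK; rewrite !coefM; apply: eq_bigr => i _.
by rewrite pq ?pq' // (leq_ltn_trans _ ltnK) // ?leq_subr // -ltnS.
Qed.

Lemma eqmodXn_sum K (I : Type) (r : seq I) (P Q : I -> {poly F}) :
  (forall i, eqmodXn K (P i) (Q i)) ->
  eqmodXn K (\sum_(i <- r) P i) (\sum_(i <- r) Q i).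
Proof. by move=> PQ; apply: (big_ind2 (eqmodXn K)) => // *; apply: eqmodXnD. Qed.

Lemma eqmodXn_prod K (I : Type) (r : seq I) (P Q : I -> {poly F}) :
  (forall i, eqmodXn K (P i) (Q i)) ->
  eqmodXn K (\prod_(i <- r) P i) (\prod_(i <- r) Q i).
Proof. by move=> PQ; apply: (big_ind2 (eqmodXn K)) => // *; apply: eqmodXnM. Qed.

Lemma eqmodXn_scaleXn K m c : (K <= m)%N -> eqmodXn K (c *: 'X^m) 0.
Proof.
move=> leKm n ltnK; rewrite coefZ coefXn coef0.
by rewrite (ltn_eqF (leq_trans ltnK leKm)) mulr0.
Qed.

Lemma eqmodXn_sum_scaleXn K (I : Type) (r : seq I) (c : I -> F) (e : I -> nat) :
  (forall i, (K <= e i)%N) -> eqmodXn K (\sum_(i <- r) c i *: 'X^(e i)) 0.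
Proof.
move=> leKe n ltnK; rewrite coef_sum coef0 big1 // => i _.
by rewrite coefZ coefXn (ltn_eqF (leq_trans ltnK (leKe i))) mulr0.
Qed.

End CongruenceModXn.

Arguments eqmodXn {F}.

Section EulerOperator.
Variable F : comNzRingType.
Local Open Scope ring_scope.
Implicit Types p q : {poly F}.

Definition euler p := 'X * p^`().

Lemma eulerM p q : euler (p * q) = euler p * q + p * euler q.
Proof. by rewrite /euler derivM mulrDr mulrA mulrCA. Qed.

Lemma euler_scaleXn c n : euler (c *: 'X^n) = (c *+ n) *: 'X^n.
Proof.
rewrite /euler derivZ derivXn -scalerAr -scalerMnl; case: n => [|n].
  by rewrite !mulr0n mulr0 scaler0.
by rewrite mulrnAr -exprS scalerMnr.
Qed.

Lemma coef_euler p n : (euler p)`_n = p`_n *+ n.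
Proof. by rewrite /euler coefXM; case: n => [|n]; rewrite ?mulr0n // coef_deriv. Qed.

End EulerOperator.

Arguments euler {F}.

Section PartitionSums.
Variables (F : numFieldType) (a : nat -> F).
Local Open Scope ring_scope.

Definition partition_sum N M n : F :=
  \sum_(k : {ffun 'I_N -> 'I_M} | (\sum_(i < N) i.+1 * k i)%N == n)
    \prod_(i < N) (a i.+1 ^+ k i / (k i)`!%:R).

Definition partition_coef n := partition_sum n n.+1 n.

Definition exp_trunc M j : {poly F} := \sum_(m < M) (a j ^+ m / m`!%:R) *: 'X^(j * m).

Definition exp_trunc_prod N M := \prod_(i < N) exp_trunc M i.+1.

Lemma prod_scaleXn (I : finType) (c : I -> F) (e : I -> nat) :
  \prod_i (c i *: 'X^(e i)) = (\prod_i c i) *: 'X^(\sum_i e i) :> {poly F}.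
Proof.
rewrite -mul_polyC rmorph_prod -prodrXr -big_split /=.
by apply: eq_bigr => i _; rewrite mul_polyC.
Qed.

Lemma coef_exp_trunc_prod N M n : (exp_trunc_prod N M)`_n = partition_sum N M n.
Proof.
rewrite /exp_trunc_prod /exp_trunc bigA_distr_bigA /= coef_sum [RHS]big_mkcond /=.
apply: eq_bigr => k _; rewrite prod_scaleXn coefZ coefXn eq_sym.
by case: eqP => _; rewrite ?mulr1 ?mulr0.
Qed.

Lemma partition_coef0 : partition_coef 0 = 1.
Proof. by rewrite /partition_coef -coef_exp_trunc_prod /exp_trunc_prod big_ord0 coef1. Qed.

Lemma exp_trunc_eqmodXn K M j :
  (K <= M)%N -> (0 < j)%N -> eqmodXn K (exp_trunc M j) (exp_trunc K j).
Proof.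
move=> leKM j_gt0; rewrite /exp_trunc -(subnKC leKM) big_split_ord /=.
rewrite -[X in eqmodXn _ _ X]addr0; apply: eqmodXnD => //.
apply: eqmodXn_sum_scaleXn => i.
by rewrite (leq_trans (leq_addr i K)) // leq_pmull.
Qed.

Lemma exp_trunc_eqmodXn1 K M j : (K <= j)%N -> eqmodXn K (exp_trunc M.+1 j) 1.
Proof.
move=> leKj; rewrite /exp_trunc big_ord_recl /= muln0 expr0 fact0 divr1 scale1r.
rewrite -[X in eqmodXn _ _ X]addr0; apply: eqmodXnD => //.
by apply: eqmodXn_sum_scaleXn => i; rewrite (leq_trans leKj) ?leq_pmulr.
Qed.

Lemma exp_trunc_prod_eqmodXn m n :
  (m <= n)%N -> eqmodXn m.+1 (exp_trunc_prod n n.+1) (exp_trunc_prod m m.+1).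
Proof.
move=> lemn; apply: (@eqmodXn_trans _ _ _ (exp_trunc_prod n m.+1)).
  by apply: eqmodXn_prod => i; apply: exp_trunc_eqmodXn.
rewrite /exp_trunc_prod -(subnKC lemn) big_split_ord /=.
rewrite -[X in eqmodXn _ _ X]mulr1; apply: eqmodXnM => //.
apply: (@eqmodXn_trans _ _ _ (\prod_(i < n - m) 1)); last by rewrite big1.
by apply: eqmodXn_prod => i; apply: exp_trunc_eqmodXn1; rewrite ltnS leq_addr.
Qed.

Lemma exp_coef_shift (c : F) i :
  (c ^+ i.+1 / (i.+1)`!%:R) *+ i.+1 = c * (c ^+ i / i`!%:R).
Proof.
rewrite factS natrM invfM [_^-1 * _]mulrC -mulr_natr -mulrA mulfVK ?pnatr_eq0 //.
by rewrite exprS mulrA.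
Qed.

Lemma euler_exp_trunc M j : (0 < j)%N ->
  eqmodXn M (euler (exp_trunc M j)) ((a j *+ j) *: 'X^j * exp_trunc M j).
Proof.
move=> j_gt0; case: M => [|M] //.
rewrite /exp_trunc /euler raddf_sum mulr_sumr mulr_sumr big_ord_recl big_ord_recr /=.
rewrite -/(euler _) euler_scaleXn muln0 mulr0n scale0r add0r -[X in eqmodXn _ X]addr0.
apply: eqmodXnD.
  apply: eqmodXn_sum => i; rewrite -/(euler _) euler_scaleXn.
  rewrite -scalerAl -scalerAr scalerA -exprD -mulnS /bump /= add1n.
  by rewrite mulnC mulrnA exp_coef_shift -mulrnAl.
apply: eqmodXn_sym; rewrite -scalerAl -scalerAr scalerA -exprD -mulnS.
by apply: eqmodXn_scaleXn; rewrite leq_pmull.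
Qed.

Definition exp_arg N : {poly F} := \sum_(i < N) a i.+1 *: 'X^(i.+1).

Lemma euler_exp_arg N : euler (exp_arg N) = \sum_(i < N) (a i.+1 *+ i.+1) *: 'X^(i.+1).
Proof.
by rewrite /euler raddf_sum mulr_sumr; apply: eq_bigr => i _; rewrite -/(euler _) euler_scaleXn.
Qed.

Lemma euler_exp_trunc_prod N M :
  eqmodXn M (euler (exp_trunc_prod N M)) (euler (exp_arg N) * exp_trunc_prod N M).
Proof.
elim: N => [|N IH].
  by rewrite /exp_trunc_prod /exp_arg !big_ord0 /euler derivC mulr0 raddf0 mulr0 mul0r.
rewrite !euler_exp_arg in IH *; rewrite /exp_trunc_prod !big_ord_recr /=.
rewrite -/(exp_trunc_prod N M) eulerM mulrDl.
apply: eqmodXnD; first by rewrite mulrA; apply: eqmodXnM.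
rewrite [_ * (exp_trunc_prod _ _ * _)]mulrCA.
by apply: eqmodXnM => //; apply: euler_exp_trunc.
Qed.

Lemma partition_coefS n :
  partition_coef n.+1 *+ n.+1 =
  \sum_(k < n.+1) (a k.+1 *+ k.+1) * partition_coef (n - k).
Proof.
rewrite /partition_coef -coef_exp_trunc_prod -coef_euler.
rewrite (euler_exp_trunc_prod _ _ _ (ltnSn n.+1)) euler_exp_arg mulr_suml coef_sum.
apply: eq_bigr => k _; rewrite -scalerAl coefZ coefXnM ltnS leqNgt (ltn_ord k) /=.
rewrite subSS -coef_exp_trunc_prod (@exp_trunc_prod_eqmodXn (n - k) n.+1) //.
exact: leq_trans (leq_subr k n) _.
Qed.

End PartitionSums.

Arguments partition_sum {F}.
Arguments partition_coef {F}.
Arguments exp_trunc_prod {F}.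

Lemma continuity_prod (I : finType) (F : I -> R -> R) (P : pred I) :
  (forall i, continuity (F i)) -> continuity (fun x => (\prod_(i | P i) F i x)%R).
Proof.
move=> F_cont; elim: (index_enum I) => [|i r IHr].
  apply: (continuity_eq (f := fun=> 1)) => [x|]; first by rewrite big_nil.
  by apply: continuity_const => x y.
case Pi: (P i).
  apply: (continuity_eq (f := fun x => F i x * (\prod_(j <- r | P j) F j x)%R)).
    by move=> x; rewrite big_cons Pi.
  exact: continuity_mult.
apply: (continuity_eq (f := fun x => (\prod_(j <- r | P j) F j x)%R)) => // x.
by rewrite big_cons Pi.
Qed.

Lemma is_lub_Rbar_infty (E : R -> Prop) l :
  is_lub_Rbar E l -> (forall r, 0 <= r -> E r) -> l = p_infty.
Proof.
case=> ub _ E_ge0; case: l ub => [l | // | ] ub.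
  have r_ge0 : 0 <= Rabs l + 1 by have := Rabs_pos l; lra.
  by have := ub _ (E_ge0 _ r_ge0); have := Rle_abs l; rewrite /=; lra.
by case: (ub 0 (E_ge0 0 (Rle_refl 0))).
Qed.

Lemma CV_radius_infty_disk (a : nat -> R) :
  (forall r, 0 <= r -> CV_disk a r) -> CV_radius a = p_infty.
Proof. exact/is_lub_Rbar_infty/Lub_Rbar_correct. Qed.

Lemma CV_radius_infty_bounded (a : nat -> R) :
  (forall r, 0 <= r -> exists M, forall n, Rabs (a n) * r ^ n <= M) ->
  CV_radius a = p_infty.
Proof.
move=> bounded; apply: (is_lub_Rbar_infty _ _ (CV_radius_bounded a)) => r r_ge0.
have [M aM] := bounded r r_ge0; exists M => n.
by rewrite Rabs_mult -RPow_abs (Rabs_pos_eq r).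
Qed.

Lemma bounded_of_convolution_le (u b : nat -> R) (B : R) :
  (forall n, 0 <= u n) -> (forall k, 0 <= b k) -> (forall n, sum_f_R0 b n <= B) ->
  (forall n, INR (S n) * u (S n) <= sum_f_R0 (fun k => b k * u (n - k)%nat) n) ->
  exists K, forall n, u n <= K.
Proof.
move=> u_ge0 b_ge0 sum_b_le conv_le.
have [N B_lt_N] := INR_unbounded B.
have [K u_le_K] : exists K, forall n, (n <= N)%coq_nat -> u n <= K.
  elim: N {B_lt_N} => [|N [K u_le_K]].
    by exists (u 0%nat) => n /Nat.le_0_r ->; apply: Rle_refl.
  exists (Rmax K (u (S N))) => n /Nat.le_succ_r [/u_le_K|->].
    by move=> ?; apply: Rle_trans (Rmax_l _ _).
  exact: Rmax_r.
have K_ge0 : 0 <= K by apply: Rle_trans (u_ge0 0%nat) (u_le_K _ (Nat.le_0_l _)).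
(* Beyond N, (n + 1) u_(n+1) <= B K <= (n + 1) K. *)
exists K => n; elim/(well_founded_induction Wf_nat.lt_wf): n => n IH.
case: (Compare_dec.le_lt_dec n N) => [/u_le_K // | ]; case: n IH => [|m] IH ltNm; first lia.
have Sm_gt0 : 0 < INR (S m) by apply: lt_0_INR; lia.
apply: (Rmult_le_reg_l _ _ _ Sm_gt0); apply: Rle_trans (conv_le m) _.
apply: Rle_trans (_ : sum_f_R0 b m * K <= _).
  rewrite [_ * K]Rmult_comm scal_sum; apply: sum_Rle => k le_km.
  by apply: Rmult_le_compat_l => //; apply: IH; lia.
apply: Rmult_le_compat_r => //.
have := sum_b_le m; have := le_INR N (S m) ltac:(lia); lra.
Qed.

Lemma CV_radius_infty_of_log_derive (a c : nat -> R) :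
  CV_radius a = p_infty ->
  (forall n, PS_derive c n = PS_mult (PS_derive a) c n) ->
  CV_radius c = p_infty.
Proof.
move=> a_infty c_rec; apply: CV_radius_infty_bounded => r r_ge0.
have a'_abs : ex_series (fun k => Rabs (PS_derive a k * r ^ k)).
  by apply: CV_disk_inside; rewrite CV_radius_derive a_infty.
pose b k := Rabs (PS_derive a k * r ^ k) * r.
apply: (bounded_of_convolution_le _ b (Series (fun k => Rabs (PS_derive a k * r ^ k)) * r)).
- move=> n; apply: Rmult_le_pos; [exact: Rabs_pos | exact: pow_le].
- by move=> k; apply: Rmult_le_pos; [exact: Rabs_pos|].
- move=> n; rewrite /b -scal_sum Rmult_comm; apply: Rmult_le_compat_r => //.
  apply: sum_incr; last by move=> k; apply: Rabs_pos.
  by apply/is_series_Reals/Series_correct.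
- move=> n; rewrite -Rmult_assoc.
  have -> : INR (S n) * Rabs (c (S n)) = Rabs (PS_derive c n).
    by rewrite /PS_derive Rabs_mult (Rabs_pos_eq _ (pos_INR _)).
  rewrite c_rec /PS_mult.
  apply: Rle_trans (Rmult_le_compat_r _ _ _ (pow_le _ _ r_ge0) (Rsum_abs _ n)) _.
  rewrite Rmult_comm scal_sum; apply: sum_Rle => k le_kn.
  have -> : r ^ S n = r ^ k * r * r ^ (n - k).
    by rewrite -[X in _ * X * _]pow_1 -!pow_add; f_equal; lia.
  rewrite /b !Rabs_mult (Rabs_pos_eq (r ^ k)); last exact: pow_le.
  by change (n - k)%coq_nat with (n - k)%N; apply: Req_le; ring.
Qed.

Lemma eq_exp_of_is_derive (h g g' : R -> R) x :
  (forall t, is_derive h t (g' t * h t)) -> (forall t, is_derive g t (g' t)) ->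
  h x = h 0 * exp (g x - g 0).
Proof.
move=> h' g_g'; pose phi t := h t * exp (- g t).
have phi'0 t : is_derive phi t 0.
  have e' : is_derive (fun u => exp (- g u)) t (- g' t * exp (- g t)).
    exact: (is_derive_comp exp _ t _ _ (is_derive_exp _) (is_derive_opp _ _ _ (g_g' t))).
  have := is_derive_mult _ _ t _ _ (h' t) e' Rmult_comm.
  by congr is_derive; rewrite /plus /mult /=; ring.
have phi_const : phi x = phi 0.
  case: (Rtotal_order x 0) => [lt_x0 | [-> // | lt_0x]].
    by apply: eq_is_derive lt_x0 => t _; apply: phi'0.
  by symmetry; apply: eq_is_derive lt_0x => t _; apply: phi'0.
have : phi x * exp (g x) = phi 0 * exp (g x) by rewrite phi_const.
rewrite /phi Rmult_assoc -exp_plus Rplus_opp_l exp_0 Rmult_1_r => ->.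
by rewrite Rmult_assoc -exp_plus; congr (_ * exp _); ring.
Qed.

Lemma PSeries_exp_of_log_derive (a c : nat -> R) x :
  CV_radius a = p_infty -> a 0%nat = 0 -> c 0%nat = 1 ->
  (forall n, PS_derive c n = PS_mult (PS_derive a) c n) ->
  PSeries c x = exp (PSeries a x).
Proof.
move=> a_infty a0 c0 c_rec.
have c_infty := CV_radius_infty_of_log_derive _ _ a_infty c_rec.
rewrite (eq_exp_of_is_derive (PSeries c) (PSeries a) (PSeries (PS_derive a))) => [|t|t].
- by rewrite !PSeries_0 a0 c0 Rminus_0_r Rmult_1_l.
- rewrite -PSeries_mult ?CV_radius_derive ?a_infty ?c_infty //.
  by rewrite -(PSeries_ext _ _ _ c_rec); apply: is_derive_PSeries; rewrite c_infty.
- by apply: is_derive_PSeries; rewrite a_infty.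
Qed.

Lemma is_series_RInt_PSeries (c : nat -> R) x : Rbar_lt (Rabs x) (CV_radius c) ->
  is_series (fun n => c n * x ^ (n + 1) / INR (n + 1)) (RInt (PSeries c) 0 x).
Proof.
move=> x_in; have int_c := is_pseries_RInt c x x_in.
have := is_series_incr_1 (fun k => scal (pow_n x k) (PS_Int c k)) (RInt (PSeries c) 0 x).
rewrite /= scal_zero_r plus_zero_r => /(_ int_c).
apply: is_series_ext => n.
change (pow_n x n.+1 * (c n / INR n.+1) = c n * x ^ (n + 1) / INR (n + 1)).
by rewrite pow_n_pow addn1 /Rdiv; ring.
Qed.

Definition exp_sq_coef (s : R) (n : nat) : R :=
  if Nat.even n then s ^ Nat.div2 n / INR (fact (Nat.div2 n)) else 0.

Lemma exp_sq_coef_even s m : exp_sq_coef s (2 * m) = s ^ m / INR (fact m).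
Proof. by rewrite /exp_sq_coef Nat.even_even Nat.div2_double. Qed.

Lemma exp_sq_coef_odd s m : exp_sq_coef s (2 * m + 1) = 0.
Proof. by rewrite /exp_sq_coef Nat.even_odd. Qed.

Lemma Rabs_exp_sq_coef s n : Rabs (exp_sq_coef s n) = exp_sq_coef (Rabs s) n.
Proof.
rewrite /exp_sq_coef; case: (Nat.even n); last exact: Rabs_R0.
rewrite Rabs_div ?RPow_abs ?(Rabs_pos_eq (INR _)) //; first exact: pos_INR.
exact/not_0_INR/fact_neq_0.
Qed.

Lemma is_pseries_exp_sq s x : is_pseries (exp_sq_coef s) x (exp (s * x ^ 2)).
Proof.
rewrite -[exp _]Rplus_0_r -(Rmult_0_r x); apply: is_pseries_odd_even.
  apply: is_series_ext (is_exp_Reals (s * x ^ 2)) => n.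
  rewrite exp_sq_coef_even /scal /= /mult /= !pow_n_pow Rpow_mult_distr /Rdiv; ring.
have ex_0 : ex_pseries (fun _ => 0) (x ^ 2).
  by apply: CV_radius_inside; rewrite CV_radius_const_0.
have := PSeries_correct _ _ ex_0; rewrite PSeries_const_0.
by apply: is_pseries_ext => n; rewrite exp_sq_coef_odd.
Qed.

Lemma CV_radius_exp_sq s : CV_radius (exp_sq_coef s) = p_infty.
Proof.
apply: CV_radius_infty_disk => r r_ge0; exists (exp (Rabs s * r ^ 2)).
apply: is_series_ext (is_pseries_exp_sq (Rabs s) r) => n.
rewrite Rabs_mult Rabs_exp_sq_coef -RPow_abs (Rabs_pos_eq r) //.
by rewrite /scal /= /mult /= pow_n_pow Rmult_comm.
Qed.

Lemma erf_PSeries x : erf x = 2 / sqrt PI * PSeries (PS_Int (exp_sq_coef (-1))) x.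
Proof.
rewrite /erf -RInt_PSeries ?CV_radius_exp_sq //; congr (_ * _); apply: RInt_ext => t _.
by rewrite (is_pseries_unique _ _ _ (is_pseries_exp_sq (-1) t)); congr exp; ring.
Qed.

Lemma A0E j :
  A j 0 = - (2 / sqrt PI) * PS_incr_1 (PS_incr_1 (PS_Int (exp_sq_coef (-1)))) j.
Proof.
case: j => [|[|[|k]]]; last first.
  change (PS_incr_1 (PS_incr_1 (PS_Int (exp_sq_coef (-1)))) k.+3)
    with (exp_sq_coef (-1) k / INR k.+1).
  rewrite /A (_ : (3 <= k.+3)%N = true) // andTb.
  have [[m ->] | [m ->]] := Nat.Even_or_Odd k.
    rewrite exp_sq_coef_even (_ : Nat.odd _ = true); last first.
      by rewrite Nat.odd_succ Nat.even_succ Nat.odd_succ Nat.even_even.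
    rewrite (_ : ((2 * m)%coq_nat.+3 - 1) / 2 = m.+1)%N; last first.
      by rewrite (_ : (2 * m)%coq_nat.+3 - 1 = m.+1 * 2)%N ?Nat.div_mul //; lia.
    rewrite (_ : ((2 * m)%coq_nat.+3 - 3) / 2 = m)%N; last first.
      by rewrite (_ : (2 * m)%coq_nat.+3 - 3 = m * 2)%N ?Nat.div_mul //; lia.
    rewrite (_ : (2 * m)%coq_nat.+3 - 2 = (2 * m)%coq_nat.+1)%N; last lia.
    have := sqrt_lt_R0 _ PI_RGT_0; have := INR_fact_neq_0 m.
    have := S_INR (2 * m)%coq_nat; have := pos_INR (2 * m)%coq_nat.
    by rewrite -tech_pow_Rmult => ? ? ? ?; field; lra.
  rewrite exp_sq_coef_odd (_ : Nat.odd _ = false); last first.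
    by rewrite Nat.odd_succ Nat.even_succ Nat.odd_succ Nat.even_odd.
  by rewrite /Rdiv Rmult_0_l Rmult_0_r.
all: by rewrite /A /= ?/zero /= Rmult_0_r.
Qed.

Lemma CV_radius_A0 : CV_radius (fun j => A j 0) = p_infty.
Proof.
have sqrtPI_gt0 := sqrt_lt_R0 _ PI_RGT_0.
rewrite (CV_radius_ext _ _ A0E) (CV_radius_scal _ (PS_incr_1 _)).
  by rewrite 2!CV_radius_incr_1 CV_radius_Int CV_radius_exp_sq.
by apply/Ropp_neq_0_compat/Rgt_not_eq/Rdiv_lt_0_compat; lra.
Qed.

Lemma PSeries_A0 x : PSeries (fun j => A j 0) x = - (x ^ 2 * erf x).
Proof.
rewrite (PSeries_ext _ _ _ A0E) (PSeries_scal _ (PS_incr_1 _)).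
by rewrite 2!PSeries_incr_1 erf_PSeries /=; ring.
Qed.

Lemma partition_coef_PS_derive (a : nat -> R) n :
  PS_derive (partition_coef a) n = PS_mult (PS_derive a) (partition_coef a) n.
Proof.
rewrite /PS_derive /PS_mult sum_f_R0E big_mkord INRE RmultE mulr_natl partition_coefS.
by apply: eq_bigr => k _; rewrite !INRE !RmultE mulr_natl.
Qed.

Lemma inner_sumE n eps : inner_sum n eps = partition_coef (fun j => A j eps) n.
Proof.
rewrite /inner_sum /partition_coef /partition_sum.
by apply: eq_bigr => k _; apply: eq_bigr => i _; rewrite RpowE INRE factE.
Qed.

Lemma continuity_inner_sum n : continuity (inner_sum n).
Proof.
apply: (continuity_eq (f := fun eps => partition_coef (fun j => A j eps) n)) => [eps|].
  by rewrite inner_sumE.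
apply: continuity_sum => k _; apply: continuity_prod => i.
apply: continuity_mult; last by apply: continuity_const => x y.
apply: continuity_exp; rewrite /A; case: (_ && _).
  by apply: continuity_const => x y.
exact: derivable_continuous derivable_id.
Qed.

Lemma inner_sum_cvg n :
  filterlim (inner_sum n) (at_right 0) (locally (partition_coef (fun j => A j 0) n)).
Proof.
apply: (filterlim_filter_le_1 (F := locally 0)); first exact: filter_le_within.
by rewrite -inner_sumE; apply/continuity_pt_filterlim; apply: continuity_inner_sum.
Qed.

Theorem lemma2 (x : R) :
  exists c : nat -> R,
    (forall n : nat,
        filterlim (fun eps => inner_sum n eps) (at_right 0) (locally (c n))) /\
    is_series (fun n : nat => c n * x ^ (n + 1) / INR (n + 1))
      (RInt (fun xi => exp (- (xi ^ 2 * erf xi))) 0 x).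
Proof.
pose a j := A j 0; pose c := partition_coef a.
have a_infty : CV_radius a = p_infty := CV_radius_A0.
have c_infty := CV_radius_infty_of_log_derive _ _ a_infty (partition_coef_PS_derive a).
exists c; split; first exact: inner_sum_cvg.
rewrite (RInt_ext _ (PSeries c)) => [|t _].
  by apply: is_series_RInt_PSeries; rewrite c_infty.
rewrite -PSeries_A0 (PSeries_exp_of_log_derive a c) //.
  exact: partition_coef0.
exact: partition_coef_PS_derive.
Qed.
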